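(* Let $(A,\mu,\alpha,\beta)$ be a BiHom-associative algebra and $r=\sum_i x_i\otimes y_i\in A\otimes A$ with $(\alpha\otimes\alpha)(r)=r=(\beta\otimes\beta)(r)$, and suppose $r$ is a solution of the associative BiHom-Yang-Baxter equation. Define $R:A\to A$ by $R(a)=\sum_i\alpha\beta^3(x_i)\,(a\,\alpha^3(y_i))$ (which equals $\sum_i(\beta^3(x_i)\,a)\,\alpha^3\beta(y_i)$). Then $R$ commutes with $\alpha$ and $\beta$ and satisfies $R(\alpha\beta(a))R(\alpha\beta(b))=R\big(\alpha\beta(a)R(b)+R(a)\alpha\beta(b)\big)$ for all $a,b\in A$, i.e. $R$ is an $\alpha\beta$-Rota-Baxter operator.
   Context: A BiHom-associative algebra $(A,\mu,\alpha,\beta)$: linear space with bilinear $\mu(x\otimes y)=xy$ and linear maps $\alpha,\beta$ with $\alpha\beta=\beta\alpha$, both multiplicative, and $\alpha(x)(yz)=(xy)\beta(z)$ for all $x,y,z$. For $r=\sum_i x_i\otimes y_i$ with $(\alpha\otimes\alpha)(r)=r=(\beta\otimes\beta)(r)$, $r$ is a solution of the associative BiHom-Yang-Baxter equation if $\sum_{i,j}\alpha(x_i)\otimes y_ix_j\otimes\beta(y_j)=\sum_{i,j}x_ix_j\otimes\beta(y_j)\otimes\beta(y_i)+\sum_{i,j}\alpha(x_i)\otimes\alpha(x_j)\otimes y_jy_i$ in $A\otimes A\otimes A$. *)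

From HB Require Import structures.
From mathcomp Require Import all_boot all_order all_algebra.
Set Implicit Arguments. Unset Strict Implicit. Unset Printing Implicit Defensive.
Import GRing.Theory.
Local Open Scope ring_scope.

Definition is_linear (K : fieldType) (A V : lmodType K) (f : A -> V) : Prop :=
  forall (c : K) (x y : A), f (c *: x + y) = c *: f x + f y.

Definition is_bilinear (K : fieldType) (A V : lmodType K) (f : A -> A -> V) : Prop :=
  (forall (c : K) x x' y, f (c *: x + x') y = c *: f x y + f x' y) /\
  (forall (c : K) x y y', f x (c *: y + y') = c *: f x y + f x y').

Definition is_trilinear (K : fieldType) (A V : lmodType K) (f : A -> A -> A -> V) : Prop :=
  (forall (c : K) x x' y z, f (c *: x + x') y z = c *: f x y z + f x' y z) /\
  (forall (c : K) x y y' z, f x (c *: y + y') z = c *: f x y z + f x y' z) /\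
  (forall (c : K) x y z z', f x y (c *: z + z') = c *: f x y z + f x y z').

Definition BiHomAssoc (K : fieldType) (A : lmodType K)
    (mu : A -> A -> A) (alpha beta : A -> A) : Prop :=
  is_bilinear mu /\ is_linear alpha /\ is_linear beta /\
  (forall x, alpha (beta x) = beta (alpha x)) /\
  (forall x y, alpha (mu x y) = mu (alpha x) (alpha y)) /\
  (forall x y, beta (mu x y) = mu (beta x) (beta y)) /\
  (forall x y z, mu (alpha x) (mu y z) = mu (mu x y) (beta z)).

(* Elements of A (x) A are represented by finite lists of pairs
   r = [:: (x_i, y_i)] meaning  sum_i x_i (x) y_i.
   Equalities in A (x) A, resp. A (x) A (x) A, are expressed through the
   universal property of the tensor product: two tensors are equal iff every
   bilinear (resp. trilinear) map into every K-vector space V agrees on them. *)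

Definition tensor2_invariant (K : fieldType) (A : lmodType K) (f : A -> A)
    (r : seq (A * A)) : Prop :=
  forall (V : lmodType K) (g : A -> A -> V), is_bilinear g ->
    \sum_(p <- r) g (f p.1) (f p.2) = \sum_(p <- r) g p.1 p.2.

Definition BiHomAYBE (K : fieldType) (A : lmodType K)
    (mu : A -> A -> A) (alpha beta : A -> A) (r : seq (A * A)) : Prop :=
  forall (V : lmodType K) (g : A -> A -> A -> V), is_trilinear g ->
    \sum_(p <- r) \sum_(q <- r) g (alpha p.1) (mu p.2 q.1) (beta q.2)
    = \sum_(p <- r) \sum_(q <- r) g (mu p.1 q.1) (beta q.2) (beta p.2)
      + \sum_(p <- r) \sum_(q <- r) g (alpha p.1) (alpha q.1) (mu q.2 p.2).

Definition RBop (K : fieldType) (A : lmodType K)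
    (mu : A -> A -> A) (alpha beta : A -> A) (r : seq (A * A)) (a : A) : A :=
  \sum_(p <- r) mu (alpha (iter 3 beta p.1)) (mu a (iter 3 alpha p.2)).

(** The Yang-Baxter equation is an identity of tensors in A (x) A (x) A, so it
    may be tested against any trilinear map.  Choosing the trilinear map
    [rb_kernel a b] below, its three terms become, respectively,
    [R(ab a) R(ab b)], [R(R(a) ab b)] and [R(ab a R(b))] (with [ab = alpha beta]),
    each after re-bracketing with BiHom-associativity and moving powers of
    alpha and beta between the two legs of [r] by its invariance. *)
From HB Require Import structures.
From mathcomp Require Import all_boot all_order all_algebra.
Import GRing.Theory.
Local Open Scope ring_scope.

Set Implicit Arguments. Unset Strict Implicit.

Section Multilinear.
Variables (K : fieldType) (A V : lmodType K).

Lemma is_linear0 (f : A -> V) : is_linear f -> f 0 = 0.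
Proof. by move=> f_lin; have := f_lin (-1) 0 0; rewrite scaler0 add0r scaleN1r addNr. Qed.

Lemma is_linearD (f : A -> V) : is_linear f -> {morph f : x y / x + y}.
Proof. by move=> f_lin x y; have := f_lin 1 x y; rewrite !scale1r. Qed.

Lemma is_linear_sum (f : A -> V) (I : Type) (s : seq I) (F : I -> A) :
  is_linear f -> f (\sum_(i <- s) F i) = \sum_(i <- s) f (F i).
Proof. by move=> f_lin; apply: (big_morph f (is_linearD f_lin) (is_linear0 f_lin)). Qed.

Lemma is_linear_big (I : Type) (s : seq I) (F : A -> I -> V) :
  (forall i, is_linear (F^~ i)) -> is_linear (fun u => \sum_(i <- s) F u i).
Proof.
move=> F_lin c x y; elim: s => [|i s IHs]; first by rewrite !big_nil scaler0 addr0.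
by rewrite !big_cons IHs F_lin scalerDr addrACA.
Qed.

Lemma is_bilinear_of_partial (g : A -> A -> V) :
  (forall y, is_linear (g^~ y)) -> (forall x, is_linear (g x)) -> is_bilinear g.
Proof. by move=> g_linl g_linr; split=> c *; [apply: g_linl | apply: g_linr]. Qed.

Lemma is_trilinear_of_partial (g : A -> A -> A -> V) :
  (forall y z, is_linear (fun x => g x y z)) ->
  (forall x z, is_linear (fun y => g x y z)) ->
  (forall x y, is_linear (g x y)) -> is_trilinear g.
Proof.
by move=> g_lin1 g_lin2 g_lin3; split; [|split] => c *;
  [apply: g_lin1 | apply: g_lin2 | apply: g_lin3].
Qed.

Lemma is_bilinear_comp (g : A -> A -> V) (f : A -> A) :
  is_bilinear g -> is_linear f -> is_bilinear (fun u v => g (f u) (f v)).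
Proof. by move=> [g_linl g_linr] f_lin; split=> c *; rewrite f_lin ?g_linl ?g_linr. Qed.

End Multilinear.

Section Endomorphisms.
Variables (K : fieldType) (A : lmodType K).
Implicit Types (f h F : A -> A) (mu : A -> A -> A) (r : seq (A * A)).

Lemma is_linear_id : is_linear (@id A).
Proof. by []. Qed.

Lemma is_linear_comp f F : is_linear f -> is_linear F -> is_linear (fun u => f (F u)).
Proof. by move=> f_lin F_lin c x y; rewrite F_lin f_lin. Qed.

Lemma is_linear_iter f n : is_linear f -> is_linear (iter n f).
Proof. by move=> f_lin; elim: n => [|n IHn] // c x y; rewrite !iterS IHn f_lin. Qed.

Lemma is_linear_mull mu F y :
  is_bilinear mu -> is_linear F -> is_linear (fun u => mu (F u) y).
Proof. by move=> [mu_linl _] F_lin c x x'; rewrite F_lin mu_linl. Qed.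

Lemma is_linear_mulr mu x F :
  is_bilinear mu -> is_linear F -> is_linear (fun u => mu x (F u)).
Proof. by move=> [_ mu_linr] F_lin c y y'; rewrite F_lin mu_linr. Qed.

Lemma tensor2_invariant_comp f h r :
  is_linear h -> tensor2_invariant f r -> tensor2_invariant h r ->
  tensor2_invariant (fun x => h (f x)) r.
Proof.
move=> h_lin r_f r_h V g g_bil.
by rewrite (r_f _ (fun u v => g (h u) (h v))) ?r_h //; apply: is_bilinear_comp.
Qed.

Lemma tensor2_invariant_iter f r n :
  is_linear f -> tensor2_invariant f r -> tensor2_invariant (iter n f) r.
Proof.
move=> f_lin r_f; elim: n => [|n IHn] V g g_bil //.
under eq_bigr => p _ do rewrite !iterS.
exact: (tensor2_invariant_comp f_lin IHn r_f g_bil).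
Qed.

Lemma tensor2_invariant_sum f r (F : A * A -> A) :
  tensor2_invariant f r -> is_bilinear (fun u v => F (u, v)) ->
  \sum_(p <- r) F p = \sum_(p <- r) F (f p.1, f p.2).
Proof. by move=> r_f F_bil; rewrite (r_f _ _ F_bil); apply: eq_bigr => -[]. Qed.

End Endomorphisms.

Section RotaBaxter.
Variables (K : fieldType) (A : lmodType K).
Variables (mu : A -> A -> A) (alpha beta : A -> A) (r : seq (A * A)).
Hypotheses (mu_bil : is_bilinear mu) (alpha_lin : is_linear alpha)
  (beta_lin : is_linear beta).
Hypothesis beta_alpha : forall x, beta (alpha x) = alpha (beta x).
Hypothesis alpha_mul : forall x y, alpha (mu x y) = mu (alpha x) (alpha y).
Hypothesis beta_mul : forall x y, beta (mu x y) = mu (beta x) (beta y).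
Hypothesis mu_assoc : forall x y z, mu (alpha x) (mu y z) = mu (mu x y) (beta z).
Hypotheses (r_alpha : tensor2_invariant alpha r) (r_beta : tensor2_invariant beta r).

Local Notation R := (RBop mu alpha beta r).

Ltac linearity :=
  repeat first [ apply: is_linear_id
    | apply: is_linear_big => ?
    | apply: (is_linear_mull _ mu_bil)
    | apply: (is_linear_mulr _ mu_bil)
    | apply: (is_linear_comp alpha_lin)
    | apply: (is_linear_comp beta_lin)
    | apply: (is_linear_comp (is_linear_iter _ alpha_lin))
    | apply: (is_linear_comp (is_linear_iter _ beta_lin)) ].

Ltac bilinearity := apply: is_bilinear_of_partial => ? /=; linearity.

Ltac push_maps := rewrite /=; repeat first
  [ rewrite alpha_mul | rewrite beta_mul | rewrite beta_alpha ].

Ltac push_maps_in H := rewrite /= in H; repeat first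
  [ rewrite alpha_mul in H | rewrite beta_mul in H | rewrite beta_alpha in H ].

(* [e] is an instance of [mu_assoc] written in readable form; pushing [alpha]
   and [beta] to the leaves brings it to the normal form of the goal. *)
Ltac reassoc e := let H := fresh in have H := e; push_maps_in H; rewrite H; clear H.
Ltac reassoc_rev e := let H := fresh in have H := e; push_maps_in H; rewrite -H; clear H.

Lemma mu_suml (I : Type) (s : seq I) (F : I -> A) y :
  mu (\sum_(i <- s) F i) y = \sum_(i <- s) mu (F i) y.
Proof. exact: (is_linear_sum _ _ (is_linear_mull y mu_bil (@is_linear_id _ _))). Qed.

Lemma mu_sumr (I : Type) (s : seq I) (F : I -> A) x :
  mu x (\sum_(i <- s) F i) = \sum_(i <- s) mu x (F i).
Proof. exact: (is_linear_sum _ _ (is_linear_mulr x mu_bil (@is_linear_id _ _))). Qed.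

Lemma tensor2_invariant_powers m n :
  tensor2_invariant (fun x => iter n beta (iter m alpha x)) r.
Proof.
by apply: tensor2_invariant_comp;
  [apply: is_linear_iter | apply: tensor2_invariant_iter ..].
Qed.

Lemma RBopE a :
  R a = \sum_(p <- r) mu (mu (iter 3 beta p.1) a) (iter 3 alpha (beta p.2)).
Proof. by apply: eq_bigr => p _ /=; rewrite mu_assoc -!beta_alpha. Qed.

Lemma RBop_linear : is_linear R.
Proof. by rewrite /RBop; linearity. Qed.

Lemma RBop_alpha a : R (alpha a) = alpha (R a).
Proof.
rewrite /RBop (is_linear_sum _ _ alpha_lin).
rewrite (tensor2_invariant_sum (tensor2_invariant_powers 1 0)).
  by apply: eq_bigr => p _ /=; rewrite !alpha_mul -!beta_alpha.
by bilinearity.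
Qed.

Lemma RBop_beta a : R (beta a) = beta (R a).
Proof.
rewrite /RBop (is_linear_sum _ _ beta_lin).
rewrite (tensor2_invariant_sum (tensor2_invariant_powers 0 1)).
  by apply: eq_bigr => p _ /=; rewrite !beta_mul -!beta_alpha.
by bilinearity.
Qed.

Definition rb_kernel (a b u m w : A) : A :=
  mu (mu (mu (iter 4 beta u) (alpha (beta a))) (iter 3 alpha (iter 2 beta m)))
     (mu (alpha (beta (beta b))) (iter 5 alpha w)).

Lemma rb_kernel_trilinear a b : is_trilinear (rb_kernel a b).
Proof. by apply: is_trilinear_of_partial => * /=; rewrite /rb_kernel; linearity. Qed.

Lemma RBop_mul_sum a b :
  mu (R (alpha (beta a))) (R (alpha (beta b))) =
  \sum_(p <- r) \sum_(q <- r) rb_kernel a b (alpha p.1) (mu p.2 q.1) (beta q.2).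
Proof.
rewrite /RBop mu_suml; under eq_bigr => p _ do rewrite mu_sumr.
rewrite [LHS](tensor2_invariant_sum (tensor2_invariant_powers 1 1)); last by bilinearity.
apply: eq_bigr => p _.
rewrite [LHS](tensor2_invariant_sum (tensor2_invariant_powers 2 0)); last by bilinearity.
apply: eq_bigr => q _; rewrite /rb_kernel; push_maps.
reassoc (mu_assoc (iter 1 alpha (iter 4 beta p.1)) (alpha (beta a))
                  (iter 4 alpha (beta p.2))).
reassoc (mu_assoc (mu (iter 4 beta p.1) (beta a)) (iter 3 alpha (iter 2 beta p.2))
                  (iter 3 alpha (iter 2 beta q.1))).
by reassoc_rev (mu_assoc (mu (mu (iter 4 beta p.1) (beta a))
                             (iter 3 alpha (iter 2 beta p.2)))
                         (iter 3 alpha (iter 3 beta q.1))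
                         (mu (alpha (beta b)) (iter 5 alpha q.2))).
Qed.

Lemma RBop_mul_RBopr_sum a b :
  R (mu (alpha (beta a)) (R b)) =
  \sum_(p <- r) \sum_(q <- r) rb_kernel a b (alpha p.1) (alpha q.1) (mu q.2 p.2).
Proof.
rewrite /rb_kernel /RBop.
under eq_bigr => p _ do rewrite mu_sumr mu_suml mu_sumr.
rewrite [LHS](tensor2_invariant_sum (tensor2_invariant_powers 2 1)); last by bilinearity.
apply: eq_bigr => p _.
rewrite [LHS](tensor2_invariant_sum (tensor2_invariant_powers 2 0)); last by bilinearity.
rewrite [RHS](tensor2_invariant_sum (tensor2_invariant_powers 0 2)); last by bilinearity.
apply: eq_bigr => q _; push_maps.
reassoc (mu_assoc (iter 2 alpha (iter 4 beta p.1))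
  (mu (alpha (beta a)) (mu (iter 3 alpha (iter 3 beta q.1)) (mu b (iter 5 alpha q.2))))
  (iter 5 alpha (beta p.2))).
reassoc (mu_assoc (alpha (iter 4 beta p.1)) (alpha (beta a))
  (mu (iter 3 alpha (iter 3 beta q.1)) (mu b (iter 5 alpha q.2)))).
reassoc (mu_assoc (mu (iter 4 beta p.1) (beta a)) (iter 3 alpha (iter 4 beta q.1))
  (mu (beta b) (iter 5 alpha (beta q.2)))).
reassoc_rev (mu_assoc (mu (mu (iter 4 beta p.1) (beta a)) (iter 3 alpha (iter 4 beta q.1)))
  (mu (beta (beta b)) (iter 5 alpha (iter 2 beta q.2))) (iter 5 alpha (beta p.2))).
by reassoc_rev (mu_assoc (beta (beta b)) (iter 5 alpha (iter 2 beta q.2))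
  (iter 5 alpha p.2)).
Qed.

Lemma RBop_mul_RBopl_sum a b :
  R (mu (R a) (alpha (beta b))) =
  \sum_(p <- r) \sum_(q <- r) rb_kernel a b (mu p.1 q.1) (beta q.2) (beta p.2).
Proof.
rewrite /rb_kernel /RBop.
under eq_bigr => p _ do rewrite mu_suml mu_suml mu_sumr.
rewrite [LHS](tensor2_invariant_sum (tensor2_invariant_powers 2 1)); last by bilinearity.
apply: eq_bigr => p _.
rewrite [LHS](tensor2_invariant_sum (tensor2_invariant_powers 0 1)); last by bilinearity.
rewrite [RHS](tensor2_invariant_sum (tensor2_invariant_powers 1 0)); last by bilinearity.
apply: eq_bigr => q _; push_maps.
reassoc (mu_assoc (iter 2 alpha (iter 4 beta p.1))
  (mu (mu (alpha (iter 4 beta q.1)) (mu a (iter 3 alpha (beta q.2)))) (alpha (beta b)))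
  (iter 5 alpha (beta p.2))).
reassoc (mu_assoc (alpha (iter 4 beta p.1))
  (mu (alpha (iter 4 beta q.1)) (mu a (iter 3 alpha (beta q.2)))) (alpha (beta b))).
reassoc_rev (mu_assoc (mu (alpha (iter 4 beta p.1))
                          (mu (alpha (iter 4 beta q.1)) (mu a (iter 3 alpha (beta q.2)))))
  (alpha (iter 2 beta b)) (iter 5 alpha (beta p.2))).
reassoc (mu_assoc (alpha (iter 4 beta p.1)) (iter 2 alpha (iter 4 beta q.1))
  (mu (alpha a) (iter 4 alpha (beta q.2)))).
by reassoc_rev (mu_assoc (mu (iter 4 beta p.1) (alpha (iter 4 beta q.1)))
  (alpha (beta a)) (iter 4 alpha (iter 2 beta q.2))).
Qed.

End RotaBaxter.

Theorem mainTheorem9 (K : fieldType) (A : lmodType K)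
    (mu : A -> A -> A) (alpha beta : A -> A) (r : seq (A * A)) :
  BiHomAssoc mu alpha beta ->
  tensor2_invariant alpha r ->
  tensor2_invariant beta r ->
  BiHomAYBE mu alpha beta r ->
  let R := RBop mu alpha beta r in
  (forall a, R a = \sum_(p <- r) mu (mu (iter 3 beta p.1) a) (iter 3 alpha (beta p.2))) /\
  (forall a, R (alpha a) = alpha (R a)) /\
  (forall a, R (beta a) = beta (R a)) /\
  (forall a b, mu (R (alpha (beta a))) (R (alpha (beta b)))
               = R (mu (alpha (beta a)) (R b) + mu (R a) (alpha (beta b)))).
Proof.
move=> [mu_bil [alpha_lin [beta_lin [alphaC [alpha_mul [beta_mul mu_assoc]]]]]].
move=> r_alpha r_beta aybe R.
have beta_alpha x : beta (alpha x) = alpha (beta x) by rewrite alphaC.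
split; first exact: RBopE.
split; first exact: RBop_alpha.
split; first exact: RBop_beta.
move=> a b; rewrite {}/R.
rewrite RBop_mul_sum // (is_linearD (RBop_linear alpha beta r mu_bil)).
rewrite RBop_mul_RBopr_sum // RBop_mul_RBopl_sum //.
by rewrite (aybe _ _ (rb_kernel_trilinear mu_bil alpha_lin beta_lin a b)) addrC.
Qed.
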